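(* Let $G=(V,E)$ be a connected graph, let $A\subseteq V$ be nonempty and let $U\subseteq V$. Then for every edge $\{u,v\}\in E$ with $u,v\in U$ there exists $a\in A$ with $u\in D_a$ and $v\in D_a$. In other words, $\bigcup_{a\in A}G[D_a]$ covers every edge of $G[U]$.
   Context: $\delta$ is the shortest-path metric of the unweighted graph $G$. For $S\subseteq V$ and $v\in V$, $\delta(S,v)=\min_{s\in S}\delta(s,v)$. $N_2(a)=\{u\in V:\delta(u,a)\le 2\}$. For $w\in V$, $C_A(w)=\{v\in V:\delta(w,v)<\delta(A,v)\}$. For $a\in A$, the extended Voronoi cell is $D_a=\Big(\bigcup_{b\in N_2(a)}C_A(b)\,\cup\,N_2(a)\Big)\cap U$. *)

From mathcomp Require Import all_boot.
Set Implicit Arguments. Unset Strict Implicit. Unset Printing Implicit Defensive.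

Section Graph.
Variables (T : finType) (e : rel T).

Definition simple_graph : Prop := symmetric e /\ irreflexive e.
Definition connected_graph : Prop := forall x y : T, connect e x y.

Fixpoint walkn (n : nat) (x y : T) : bool :=
  if n is n'.+1 then [exists z, e x z && walkn n' z y] else x == y.

(* shortest-path distance delta(x,y): least n with a walk of length n;
   equals #|T| ("infinity") if y is unreachable from x (never happens in a
   connected graph). *)
Definition dist (x y : T) : nat := find (fun n => walkn n x y) (iota 0 #|T|).

Definition dist_set (S : {set T}) (v : T) : nat :=
  \big[minn/#|T|]_(s in S) dist s v.

Definition N2 (a : T) : {set T} := [set u | dist u a <= 2].

Definition cell (A : {set T}) (w : T) : {set T} :=
  [set v | dist w v < dist_set A v].

Definition Dcell (A U : {set T}) (a : T) : {set T} :=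
  ((\bigcup_(b in N2 a) cell A b) :|: N2 a) :&: U.

End Graph.

From mathcomp Require Import all_boot zify.

(* Orient the edge {u,v} so that u is at least as close to A as v, i.e.
   delta(A,u) <= delta(A,v), and let a in A realise d := delta(A,u).
   - If d <= 1, then delta(a,u) <= 1 and delta(a,v) <= 2, so u, v are in N_2(a).
   - If d >= 2, a shortest a-u walk passes through a vertex b with
     delta(a,b) <= 2 and delta(b,u) <= d - 2; hence b is in N_2(a), and
     delta(b,u) <= d-2 < d = delta(A,u), delta(b,v) <= d-1 < d <= delta(A,v),
     so u and v both lie in the cell C_A(b) and thus in D_a. *)

Set Implicit Arguments.
Unset Strict Implicit.
Unset Printing Implicit Defensive.

Lemma bigminn_le (I : finType) (P : pred I) (F : I -> nat) x0 i :
  P i -> \big[minn/x0]_(j | P j) F j <= F i.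
Proof.
move=> Pi; rewrite -big_filter.
have : i \in [seq j <- index_enum I | P j] by rewrite mem_filter Pi mem_index_enum.
elim: [seq j <- _ | _] => [|j r IH] //; rewrite inE big_cons.
by case/orP=> [/eqP<-|/IH le_r]; rewrite geq_min ?leqnn ?le_r ?orbT.
Qed.

Lemma bigminn_attained (I : finType) (P : pred I) (F : I -> nat) x0 i0 :
  P i0 -> (forall i, P i -> F i <= x0) ->
  exists2 i, P i & \big[minn/x0]_(j | P j) F j = F i.
Proof.
move=> Pi0 F_le.
have [min_x0|//] : \big[minn/x0]_(j | P j) F j = x0 \/
                   exists2 i, P i & \big[minn/x0]_(j | P j) F j = F i.
  elim/big_ind: _ => [|m n hm hn|i Pi]; [by left | | by right; exists i].
  by rewrite /minn; case: ifP.
exists i0 => //; apply/eqP; rewrite eqn_leq {2}min_x0 F_le // andbT.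
exact: bigminn_le.
Qed.

Section Distances.
Variables (T : finType) (e : rel T).

Lemma walkn_rcons n x y z : walkn e n x y -> e y z -> walkn e n.+1 x z.
Proof.
elim: n x => [|n IH] x /=.
  by move=> /eqP-> e_yz; apply/existsP; exists z; rewrite e_yz eqxx.
case/existsP=> w /andP[e_xw w_y] e_yz.
by apply/existsP; exists w; rewrite e_xw; exact: IH.
Qed.

Lemma walkn_split m n x y :
  walkn e (m + n) x y -> exists2 z, walkn e m x z & walkn e n z y.
Proof.
elim: m x => [|m IH] x /=; first by exists x.
case/existsP=> w /andP[e_xw /IH[z w_z z_y]].
by exists z => //; apply/existsP; exists w; rewrite e_xw.
Qed.

Lemma walkn_path x p : path e x p -> walkn e (size p) x (last x p).
Proof.
elim: p x => [|y p IH] x /=; first by rewrite eqxx.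
by case/andP=> e_xy /IH y_p; apply/existsP; exists y; rewrite e_xy.
Qed.

Lemma dist_le m x y : walkn e m x y -> dist e x y <= m.
Proof.
move=> w_m; rewrite /dist; case: (ltnP m #|T|) => [lt_mT|le_Tm].
  rewrite leqNgt; apply/negP=> /(before_find 0).
  by rewrite nth_iota // add0n w_m.
by apply: leq_trans le_Tm; rewrite -{2}(size_iota 0 #|T|) find_size.
Qed.

Lemma dist_le_card x y : dist e x y <= #|T|.
Proof. by rewrite /dist -{2}(size_iota 0 #|T|) find_size. Qed.

(* A reachable vertex is reachable by a walk of length < #|T| (a simple
   path), so in a connected graph [dist] is realised by a walk. *)
Lemma walkn_dist x y : connect e x y -> walkn e (dist e x y) x y.
Proof.
case/connectP=> p e_p ->; case/shortenP: e_p => q e_q uniq_q _.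
have lt_qT : size q < #|T|.
  by have := max_card (mem (x :: q)); rewrite (card_uniqP uniq_q).
have has_walk : has (fun n => walkn e n x (last x q)) (iota 0 #|T|).
  by apply/hasP; exists (size q); rewrite ?mem_iota ?walkn_path.
have := nth_find 0 has_walk; rewrite nth_iota ?add0n //.
by rewrite -{2}(size_iota 0 #|T|) -has_find.
Qed.

Hypothesis e_sym : symmetric e.
Hypothesis e_conn : connected_graph e.

Lemma walkn_sym n x y : walkn e n x y -> walkn e n y x.
Proof.
elim: n x => [|n IH] x /=; first by move/eqP->.
by case/existsP=> w /andP[e_xw /IH w_y]; apply: walkn_rcons w_y _; rewrite e_sym.
Qed.

Lemma dist_sym x y : dist e x y = dist e y x.
Proof.
by apply/eqP; rewrite eqn_leq !dist_le // walkn_sym // walkn_dist.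
Qed.

Lemma dist_edge x y z : e y z -> dist e x z <= (dist e x y).+1.
Proof. by move=> e_yz; apply: dist_le (walkn_rcons (walkn_dist (e_conn x y)) e_yz). Qed.

Lemma geodesic_split k x y : k <= dist e x y ->
  exists2 z, dist e x z <= k & dist e z y <= dist e x y - k.
Proof.
move=> le_k; have := walkn_dist (e_conn x y); rewrite -{1}(subnKC le_k).
by case/walkn_split=> z w_xz w_zy; exists z; apply: dist_le.
Qed.

End Distances.

Section VoronoiCells.
Variables (T : finType) (e : rel T).
Hypothesis e_sym : symmetric e.
Hypothesis e_conn : connected_graph e.
Variables (A U : {set T}).
Hypothesis A_neq0 : A != set0.

Lemma dist_set_attained v : exists2 a, a \in A & dist e a v = dist_set e A v.
Proof.
have [s0 s0_A] := set0Pn _ A_neq0.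
have [a a_A min_a] := bigminn_attained s0_A (fun s _ => dist_le_card e s v).
by exists a.
Qed.

Lemma Dcell_N2 a x : x \in U -> dist e a x <= 2 -> x \in Dcell e A U a.
Proof.
by move=> x_U le_ax; rewrite !inE (dist_sym e_sym e_conn) le_ax orbT x_U.
Qed.

Lemma Dcell_cell a b x : x \in U -> dist e a b <= 2 ->
  dist e b x < dist_set e A x -> x \in Dcell e A U a.
Proof.
move=> x_U le_ab lt_bx; rewrite !inE x_U andbT; apply/orP; left.
by apply/bigcupP; exists b; rewrite inE // (dist_sym e_sym e_conn).
Qed.

Lemma edge_in_Dcell_oriented u v : e u v -> u \in U -> v \in U ->
  dist_set e A u <= dist_set e A v ->
  exists2 a, a \in A & (u \in Dcell e A U a) && (v \in Dcell e A U a).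
Proof.
move=> e_uv u_U v_U le_uv; have [a a_A d_au] := dist_set_attained u.
exists a => //; have le_av := dist_edge e_conn a e_uv.
have [le_d1|lt_1d] := leqP (dist e a u) 1.
  by rewrite !Dcell_N2 // ?(leq_trans le_av) // (leq_trans le_d1).
have [b le_ab le_bu] := geodesic_split e_conn lt_1d.
have le_bv := dist_edge e_conn b e_uv.
by apply/andP; split; apply: (Dcell_cell (b := b)) => //; lia.
Qed.

End VoronoiCells.

Theorem lemma6 (T : finType) (e : rel T) (A U : {set T}) :
  simple_graph e -> connected_graph e -> A != set0 ->
  forall u v : T, e u v -> u \in U -> v \in U ->
  exists2 a, a \in A & (u \in Dcell e A U a) && (v \in Dcell e A U a).
Proof.
move=> [e_sym _] e_conn A_neq0 u v e_uv u_U v_U.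
have [le_uv|/ltnW le_vu] := leqP (dist_set e A u) (dist_set e A v).
  exact: edge_in_Dcell_oriented.
have e_vu : e v u by rewrite e_sym.
have [a a_A /andP[v_Da u_Da]] :=
  edge_in_Dcell_oriented e_sym e_conn A_neq0 e_vu v_U u_U le_vu.
by exists a; rewrite ?u_Da ?v_Da.
Qed.
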